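(* Let $A$ be a nonempty finite set with $|A|=n$ and $\Sigma\in\mathbb{R}$. The map $\varphi$ defined by $\varphi(d)(x,y)=d(x,\cdot)+d(y,\cdot)-d(x,y)-d(\cdot,\cdot)+\Sigma/n$ is a bijection from the set of metrics on $A$ onto the set of $\Sigma$-proximities on $A$, and its inverse is the map $\psi$ given by $\psi(\sigma)(x,y)=\tfrac12(\sigma(x,x)+\sigma(y,y))-\sigma(x,y)$.
   Context: A metric on $A$ is a function $d:A^2\to\mathbb{R}$ such that for all $x,y,z\in A$: $d(x,y)=0$ iff $x=y$, and $d(x,y)+d(x,z)-d(y,z)\ge 0$. Notation: $d(x,\cdot)=\frac1n\sum_{t\in A}d(x,t)$, $d(\cdot,\cdot)=\frac1{n^2}\sum_{s,t\in A}d(s,t)$. A function $\sigma:A^2\to\mathbb{R}$ is a $\Sigma$-proximity on $A$ if for all $x,y,z\in A$: (1) $\sum_{t\in A}\sigma(x,t)=\Sigma$; (2) $\sigma(x,y)+\sigma(x,z)-\sigma(y,z)\le\sigma(x,x)$, with strict inequality whenever $z=y$ and $x\ne y$. *)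

From mathcomp Require Import all_boot all_order all_algebra.
Set Implicit Arguments. Unset Strict Implicit. Unset Printing Implicit Defensive.
Import Order.TTheory GRing.Theory Num.Theory.
Local Open Scope ring_scope.

Section Defs.
Variables (R : realFieldType) (A : finType).

(* metric on A, exactly as in the paper (symmetry/nonnegativity follow) *)
Definition is_metric (d : A -> A -> R) : Prop :=
  (forall x y, d x y = 0 <-> x = y) /\
  (forall x y z, 0 <= d x y + d x z - d y z).

Definition is_proximity (Sigma : R) (s : A -> A -> R) : Prop :=
  (forall x, \sum_(t : A) s x t = Sigma) /\
  (forall x y z, s x y + s x z - s y z <= s x x) /\
  (forall x y, x != y -> s x y + s x y - s y y < s x x).

(* d(x,.) and d(.,.) with n = #|A| *)
Definition dpt (d : A -> A -> R) (x : A) : R :=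
  (#|A|%:R)^-1 * \sum_(t : A) d x t.
Definition dall (d : A -> A -> R) : R :=
  ((#|A|%:R) ^+ 2)^-1 * \sum_(s : A) \sum_(t : A) d s t.

Definition phi (Sigma : R) (d : A -> A -> R) : A -> A -> R :=
  fun x y => dpt d x + dpt d y - d x y - dall d + Sigma / #|A|%:R.

Definition psi (s : A -> A -> R) : A -> A -> R :=
  fun x y => 2^-1 * (s x x + s y y) - s x y.
End Defs.

From mathcomp Require Import all_boot all_order all_algebra.
From mathcomp Require Import ring lra.
From Stdlib Require Import FunctionalExtensionality.
Set Implicit Arguments. Unset Strict Implicit.
Import Order.TTheory GRing.Theory Num.Theory.
Local Open Scope ring_scope.

(** [psi] cancels the averaged terms of [phi d], so [psi (phi d) = d] as soon
    as [d] vanishes on the diagonal; conversely [phi] rebuilds [s] from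
    [psi s] because the rows of [s] sum to [Sigma].  Under these maps the
    triangle inequality for [d] is exactly the proximity inequality for
    [phi d], and positivity of [d] off the diagonal is its strict case. *)

Section MetricProximity.
Variables (R : realFieldType) (A : finType).
Implicit Types (d s : A -> A -> R) (Sigma : R).

Lemma metric_diag0 d : is_metric d -> forall x, d x x = 0.
Proof. by move=> [d0 _] x; apply/d0. Qed.

Lemma metric_gt0 d : is_metric d -> forall x y, x != y -> 0 < d x y.
Proof.
move=> dM x y xy; have [d0 tri] := dM.
have dxy : d x y != 0 by apply/eqP => /d0 /eqP; rewrite (negbTE xy).
have := tri x y y; rewrite metric_diag0 // => h.
by rewrite lt0r dxy /=; lra.
Qed.

Lemma sumr_cst (c : R) : \sum_(t : A) c = #|A|%:R * c.
Proof. by rewrite sumr_const mulr_natl. Qed.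

Lemma dall_dpt d : dall d = (#|A|%:R)^-1 * \sum_(x : A) dpt d x.
Proof. by rewrite /dall /dpt -mulr_sumr mulrA -exprVn expr2. Qed.

Hypothesis A_gt0 : (0 < #|A|)%N.

Let card_neq0 : (#|A|%:R : R) != 0.
Proof. by rewrite pnatr_eq0 -lt0n. Qed.

Lemma phi_row_sum Sigma d x : \sum_(t : A) phi Sigma d x t = Sigma.
Proof.
rewrite !(big_split, sumrB) /= sumrN !sumr_cst dall_dpt [dpt _ x]/dpt.
by field.
Qed.

Lemma phi_proximity Sigma d : is_metric d -> is_proximity Sigma (phi Sigma d).
Proof.
move=> dM; have [_ tri] := dM; have dxx := metric_diag0 dM.
split; [exact: phi_row_sum | split].
- by move=> x y z; rewrite /phi dxx; have := tri x y z; lra.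
- move=> x y xy; rewrite /phi !dxx.
  by have := metric_gt0 dM xy; lra.
Qed.

Lemma psi_metric Sigma s : is_proximity Sigma s -> is_metric (psi s).
Proof.
move=> [_ [tri strict]]; split; last by move=> x y z; have := tri x y z; rewrite /psi; lra.
move=> x y; split; last by move=> ->; rewrite /psi; field.
move=> h; apply/eqP; apply/negPn/negP => xy.
by have := strict x y xy; move: h; rewrite /psi; lra.
Qed.

Lemma psi_phi Sigma d : (forall x, d x x = 0) -> psi (phi Sigma d) = d.
Proof.
move=> dxx; apply: functional_extensionality => x.
apply: functional_extensionality => y.
by rewrite /psi /phi !dxx; field.
Qed.

Section RowSums.
Variables (Sigma : R) (s : A -> A -> R).
Hypothesis row_sum : forall x, \sum_(t : A) s x t = Sigma.

Lemma dpt_psi x :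
  dpt (psi s) x = 2^-1 * s x x + 2^-1 * (#|A|%:R)^-1 * \sum_(t : A) s t t - (#|A|%:R)^-1 * Sigma.
Proof.
rewrite /dpt /psi sumrB row_sum -mulr_sumr big_split /= sumr_cst.
by field.
Qed.

Lemma dall_psi : dall (psi s) = (#|A|%:R)^-1 * \sum_(t : A) s t t - (#|A|%:R)^-1 * Sigma.
Proof.
rewrite dall_dpt (eq_bigr _ (fun x _ => dpt_psi x)) !(big_split, sumrB) /=.
by rewrite -!mulr_sumr !sumr_cst; field.
Qed.

Lemma phi_psi : phi Sigma (psi s) = s.
Proof.
apply: functional_extensionality => x; apply: functional_extensionality => y.
by rewrite /phi !dpt_psi dall_psi /psi; field.
Qed.

End RowSums.
End MetricProximity.

Theorem theorem1 (R : realFieldType) (A : finType) (Sigma : R) :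
  (0 < #|A|)%N ->
  (forall d : A -> A -> R, is_metric d -> is_proximity Sigma (phi Sigma d)) /\
  (forall s : A -> A -> R, is_proximity Sigma s -> is_metric (psi s)) /\
  (forall d : A -> A -> R, is_metric d -> psi (phi Sigma d) = d) /\
  (forall s : A -> A -> R, is_proximity Sigma s -> phi Sigma (psi s) = s).
Proof.
move=> A_gt0; split; [|split; [|split]].
- by move=> d; exact: phi_proximity.
- by move=> s; exact: psi_metric.
- by move=> d dM; exact/psi_phi/metric_diag0.
- by move=> s [row_sum _]; exact: phi_psi.
Qed.
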